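(* For every $n\ge3$, the line graph of the $n$-cube $Q_n$ does not admit perfect state transfer between any two distinct vertices with respect to its adjacency matrix.
   Context: The $n$-cube has vertex set $\{0,1\}^n$, two vertices adjacent iff they differ in exactly one coordinate. The line graph of $X$ has vertex set $E(X)$, edges adjacent iff they share an endpoint. Perfect state transfer from vertex $x$ to vertex $y$ with Hamiltonian $M$: $e^{-\mathrm{i}\tau M}\mathbf e_x=\eta\mathbf e_y$ for some $\tau>0$, $|\eta|=1$. *)

From HB Require Import structures.
From mathcomp Require Import all_boot all_order all_algebra.
From mathcomp Require Import all_classical all_reals topology normedtype sequences.
From mathcomp Require Import complex.
Set Implicit Arguments. Unset Strict Implicit. Unset Printing Implicit Defensive.
Import Order.TTheory GRing.Theory Num.Theory.
Import numFieldNormedType.Exports.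
Local Open Scope ring_scope.

Definition cube (n : nat) := {ffun 'I_n -> bool}.

Definition cube_adj (n : nat) (u v : cube n) : bool :=
  #|[set i : 'I_n | u i != v i]| == 1%N.

Definition is_cube_edge (n : nat) (e : {set cube n}) : bool :=
  [exists u : cube n, exists v : cube n, cube_adj u v && (e == [set u; v])].

Notation edge n := {e : {set cube n} | is_cube_edge e}.

Definition line_adj (n : nat) (e f : edge n) : bool :=
  (e != f) && (val e :&: val f != finset.set0).

Definition lineQ_adjmx (R : rcfType) (n : nat) : 'M[R[i]]_#|{: edge n}| :=
  \matrix_(a, b) (line_adj (enum_val a : edge n) (enum_val b : edge n))%:R.

Local Open Scope classical_set_scope.
Local Open Scope ring_scope.

Definition ccvg (R : realType) (u : nat -> R[i]) (l : R[i]) : Prop :=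
  ((fun N => complex.Re (u N)) @ \oo --> complex.Re l) /\
  ((fun N => complex.Im (u N)) @ \oo --> complex.Im l).

(** Partial sums of the exponential series of -i tau M  (note: Complex 0 (-tau) = -i*tau). *)
Definition expmx_partial (R : realType) (m : nat) (M : 'M[R[i]]_m) (tau : R)
    (N : nat) : 'M[R[i]]_m :=
  \sum_(k < N) (((complex.Complex 0 (- tau)) ^+ k) / (k`!)%:R) *: M ^+ k.

Definition is_expmx (R : realType) (m : nat) (M : 'M[R[i]]_m) (tau : R)
    (U : 'M[R[i]]_m) : Prop :=
  forall a b : 'I_m, ccvg (fun N => expmx_partial M tau N a b) (U a b).

Definition PST (R : realType) (m : nat) (M : 'M[R[i]]_m) (x y : 'I_m) : Prop :=
  exists tau : R, 0 < tau /\
  exists eta : R[i], `|eta| = 1 /\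
  exists U : 'M[R[i]]_m, is_expmx M tau U /\
  U *m delta_mx x (0 : 'I_1) = eta *: delta_mx y (0 : 'I_1).

(* If w is a left eigenvector of the Hamiltonian A with real eigenvalue a, then
   w exp(-i tau A) = exp(-i tau a) w, so perfect state transfer from x to y is
   impossible as soon as w_x <> 0 = w_y.  In the line graph of Q_n, the four
   edges of a square of Q_n, weighted +1, -1, +1, -1 around the square, span such
   an eigenvector, with eigenvalue -2.  For n >= 3 the edge x lies on two squares
   whose edge sets meet only in x, and y cannot lie on both. *)

From HB Require Import structures.
From mathcomp Require Import all_boot all_order all_algebra.
From mathcomp Require Import all_classical all_reals topology normedtype sequences.
From mathcomp Require Import complex trigo ring.
Set Implicit Arguments. Unset Strict Implicit. Unset Printing Implicit Defensive.
Import Order.TTheory GRing.Theory Num.Theory.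
Import numFieldNormedType.Exports.
Local Open Scope ring_scope.
Local Open Scope complex_scope.

Section ImaginaryExponential.
Context {R : realType}.
Implicit Types (t : R) (k : nat).

Definition expi_partial t (N : nat) : R[i] :=
  \sum_(k < N) (Complex 0 t) ^+ k / (k`!)%:R.

Lemma imaginaryX t k : (Complex 0 t) ^+ k =
  Complex ((~~ odd k)%:R * (-1) ^+ k./2 * t ^+ k)
          ((odd k)%:R * (-1) ^+ k.-1./2 * t ^+ k).
Proof.
elim: k => [|k IHk].
  by apply/eqP; rewrite eq_complex /= !expr0 !mulr1 !eqxx.
rewrite exprS IHk; simpc; apply/eqP; rewrite eq_complex /=.
have [m km] : exists m, k = (odd k + m.*2)%N by exists k./2; rewrite odd_double_half.
case: (boolP (odd k)) => ok.
  rewrite ok /= in km; rewrite km /= uphalf_double half_double !exprS !mul1r.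
  by apply/andP; split; apply/eqP; ring.
rewrite (negbTE ok) /= in km; rewrite km /= uphalf_double half_double !exprS.
by rewrite !mul1r !mul0r !mulr0 oppr0 eqxx /=; apply/eqP; ring.
Qed.

Lemma divr_realC (z : R[i]) (r : R) :
  z / r%:C = Complex (complex.Re z / r) (complex.Im z / r).
Proof. by case: z => a b; rewrite -(fmorphV (real_complex R)); simpc. Qed.

Lemma Re_expi_partial t :
  (fun N => complex.Re (expi_partial t N)) = series (cos_coeff t).
Proof.
apply/funext => N; rewrite seriesEord /= raddf_sum; apply: eq_bigr => k _ /=.
by rewrite -(rmorph_nat (real_complex R)) divr_realC imaginaryX.
Qed.

Lemma Im_expi_partial t :
  (fun N => complex.Im (expi_partial t N)) = series (sin_coeff t).
Proof.
apply/funext => N; rewrite seriesEord /= raddf_sum; apply: eq_bigr => k _ /=.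
by rewrite -(rmorph_nat (real_complex R)) divr_realC imaginaryX.
Qed.

Lemma expi_partial_not_ccvg0 t : ~ ccvg (expi_partial t) 0.
Proof.
rewrite /ccvg Re_expi_partial Im_expi_partial /= => -[cos_cvg sin_cvg].
have cos0 : cos t = 0 by rewrite unlock; exact: cvg_lim.
have sin0 : sin t = 0 by rewrite unlock; exact: cvg_lim.
by have /eqP := cos2Dsin2 t; rewrite cos0 sin0 expr0n addr0 eq_sym oner_eq0.
Qed.

Lemma ccvg_cst (l : R[i]) : ccvg (fun=> l) l.
Proof. by split; exact: cvg_cst. Qed.

Lemma ccvgD (u v : nat -> R[i]) (a b : R[i]) :
  ccvg u a -> ccvg v b -> ccvg (fun N => u N + v N) (a + b).
Proof.
move=> [ur ui] [vr vi]; split.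
- under eq_fun do rewrite raddfD; rewrite raddfD; exact: cvgD.
- under eq_fun do rewrite raddfD; rewrite raddfD; exact: cvgD.
Qed.

Lemma ccvgMl (c : R[i]) (u : nat -> R[i]) (a : R[i]) :
  ccvg u a -> ccvg (fun N => c * u N) (c * a).
Proof.
have ReM (z w : R[i]) :
  complex.Re (z * w) = complex.Re z * complex.Re w - complex.Im z * complex.Im w.
  by case: z; case: w.
have ImM (z w : R[i]) :
  complex.Im (z * w) = complex.Re z * complex.Im w + complex.Im z * complex.Re w.
  by case: z; case: w.
move=> [ur ui]; split.
- under eq_fun do rewrite ReM; rewrite ReM; apply: cvgB; exact: cvgMr.
- under eq_fun do rewrite ImM; rewrite ImM; apply: cvgD; exact: cvgMr.
Qed.

Lemma ccvg_sum (I : Type) (r : seq I) (u : I -> nat -> R[i]) (l : I -> R[i]) :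
  (forall i, ccvg (u i) (l i)) ->
  ccvg (fun N => \sum_(i <- r) u i N) (\sum_(i <- r) l i).
Proof.
move=> ul; elim: r => [|i r IHr].
  by under eq_fun do rewrite big_nil; rewrite big_nil; exact: ccvg_cst.
by under eq_fun do rewrite big_cons; rewrite big_cons; exact: ccvgD.
Qed.

End ImaginaryExponential.

Lemma leigen_mulmxX {K : pzRingType} {m} {A : 'M[K]_m} {a : K} {w : 'rV_m} k :
  w *m A = a *: w -> w *m A ^+ k = a ^+ k *: w.
Proof.
move=> wA; elim: k => [|k IHk]; first by rewrite expr0 mulmx1 scale1r.
by rewrite exprSr -mulmxE mulmxA IHk -scalemxAl wA scalerA -exprSr.
Qed.

Section LeftEigenvector.
Variables (R : realType) (m : nat) (A : 'M[R[i]]_m) (a : R) (w : 'rV[R[i]]_m).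
Hypothesis wA : w *m A = a%:C *: w.

Lemma leigen_expmx_partial tau N :
  w *m expmx_partial A tau N = expi_partial (- tau * a) N *: w.
Proof.
rewrite /expmx_partial mulmx_sumr /expi_partial scaler_suml; apply: eq_bigr => k _.
rewrite -scalemxAr (leigen_mulmxX k wA) scalerA mulrAC -exprMn; congr (_ ^+ _ / _ *: _).
by simpc.
Qed.

Lemma leigen_noPST x y : w 0 x != 0 -> w 0 y = 0 -> ~ PST A x y.
Proof.
move=> wx0 wy0 [tau [_ [eta [_ [U [expU Ux]]]]]].
have wUx : (w *m U) 0 x = 0.
  have := congr1 (fun M => (w *m M) 0 0) Ux.
  by rewrite mulmxA -colE -scalemxAr -colE !mxE wy0 mulr0.
have : ccvg (fun N => (w *m expmx_partial A tau N) 0 x) ((w *m U) 0 x).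
  under eq_fun do rewrite mxE; rewrite mxE.
  by apply: ccvg_sum => b; exact: ccvgMl.
rewrite wUx; under eq_fun do rewrite leigen_expmx_partial mxE.
move/(ccvgMl (w 0 x)^-1); rewrite mulr0.
under eq_fun do rewrite mulrC mulfK //.
exact: expi_partial_not_ccvg0.
Qed.

End LeftEigenvector.

Lemma card_set2I (T : finType) (a b : T) (F : {set T}) : a != b ->
  #|[set a; b] :&: F| = ((a \in F) + (b \in F))%N.
Proof.
move=> ab; rewrite -sum1_card (eq_bigl (fun x => (x \in [set a; b]) && (x \in F))).
  rewrite big_mkcondr /= big_setU1 ?inE //= big_set1.
  by case: (a \in F); case: (b \in F).
by move=> x; rewrite finset.in_setI.
Qed.

Lemma ord_avoid2 m (i j : 'I_m) : (2 < m)%N -> exists k : 'I_m, (k != i) && (k != j).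
Proof.
move=> m_gt2; have : (0 < #|~: [set i; j]|)%N.
  rewrite cardsCs finset.setCK card_ord cards2 subn_gt0.
  by rewrite (leq_ltn_trans _ m_gt2) //; case: (i != j).
by case/card_gt0P => k; rewrite !inE negb_or; exists k.
Qed.

Lemma sum_natr_eq_mul (K : pzSemiRingType) (T : finType) (r : T) (F : T -> K) :
  \sum_t (t == r)%:R * F t = F r.
Proof.
rewrite (bigD1 r) //= eqxx mul1r big1 ?addr0 // => t /negbTE ->.
by rewrite mul0r.
Qed.

Section CubeEdges.
Context {n : nat}.
Implicit Types (z u : cube n) (i j s t : 'I_n) (e f : edge n).

Definition flip z t : cube n := [ffun s => if s == t then ~~ z s else z s].

Lemma flip_at z t : flip z t t = ~~ z t.
Proof. by rewrite ffunE eqxx. Qed.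

Lemma flip_ne z t s : s != t -> flip z t s = z s.
Proof. by rewrite ffunE => /negbTE ->. Qed.

Lemma flip_neq z t : flip z t != z.
Proof. by apply/eqP => /ffunP /(_ t); rewrite flip_at; case: (z t). Qed.

Lemma flipC z s t : flip (flip z s) t = flip (flip z t) s.
Proof. by apply/ffunP => r; rewrite !ffunE; case: (r == t); case: (r == s). Qed.

Lemma cube_adj_flip z t : cube_adj z (flip z t).
Proof.
rewrite /cube_adj (_ : [set s | z s != flip z t s] = [set t]) ?cards1 //.
apply/finset.setP => s; rewrite !inE ffunE.
by case: (s =P t) => [->|_]; [case: (z t) | rewrite eqxx].
Qed.

Lemma is_cube_edge_flip z t : is_cube_edge [set z; flip z t].
Proof.
by apply/existsP; exists z; apply/existsP; exists (flip z t); rewrite cube_adj_flip eqxx.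
Qed.

Definition cube_edge z t : edge n := exist _ [set z; flip z t] (is_cube_edge_flip z t).

Lemma edge_decomp e : exists u i, e = cube_edge u i.
Proof.
have /existsP [u /existsP [v /andP [/cards1P [i uv_i] /eqP e_uv]]] := valP e.
exists u, i; apply: val_inj; rewrite /= e_uv; congr [set _; _].
apply/ffunP => s; rewrite ffunE; move/finset.setP/(_ s): uv_i; rewrite !inE.
case: (s =P i) => [->|_] /=; first by case: (u i); case: (v i).
by move/negbT; rewrite negbK => /eqP.
Qed.

Lemma card_edge e : #|val e| = 2%N.
Proof. by have [u [i ->]] := edge_decomp e; rewrite cards2 eq_sym flip_neq. Qed.

Lemma card_edgeI e f : #|val e :&: val f| = (line_adj e f + 2 * (e == f))%N.
Proof.
rewrite /line_adj; have [->|nef] := eqVneq e f; first by rewrite finset.setIid card_edge.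
suff : (#|val e :&: val f| <= 1)%N by rewrite /= addn0 -cards_eq0; case: #|_| => [|[]].
rewrite leqNgt; apply: contra nef => card_gt1.
have eI : val e :&: val f = val e.
  by apply/eqP; rewrite eqEcard finset.subsetIl card_edge.
have fI : val e :&: val f = val f.
  by apply/eqP; rewrite eqEcard finset.subsetIr card_edge.
by apply/eqP/val_inj; rewrite -eI fI.
Qed.

Definition square_vec (K : pzRingType) u i j f : K :=
  (f == cube_edge u i)%:R - (f == cube_edge u j)%:R
  + (f == cube_edge (flip u j) i)%:R - (f == cube_edge (flip u i) j)%:R.

(* Since [line_adj e f = |e :&: f| - 2 (e == f)] and every vertex of the square
   lies on exactly one positive and one negative side, the intersection counts
   cancel. *)
Lemma square_vec_leigen (K : comRingType) u i j f :
  \sum_e square_vec K u i j e * (line_adj e f)%:R = -2 * square_vec K u i j f.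
Proof.
have adjE e : (line_adj e f)%:R = #|val e :&: val f|%:R - 2 * (f == e)%:R :> K.
  by rewrite card_edgeI natrD natrM eq_sym addrK.
rewrite /square_vec; under eq_bigr do rewrite !(mulrBl, mulrDl).
rewrite sumrB big_split sumrB /= !sum_natr_eq_mul !adjE /=.
rewrite !card_set2I 1?eq_sym ?flip_neq // (flipC u i j) !natrD.
ring.
Qed.

Definition square_row (R : realType) u i j : 'rV[R[i]]_#|{: edge n}| :=
  \row_c square_vec _ u i j (enum_val c).

Lemma square_row_leigen (R : realType) u i j :
  square_row R u i j *m lineQ_adjmx R n = (-2 : R)%:C *: square_row R u i j.
Proof.
apply/rowP => c; rewrite !mxE.
under eq_bigr do rewrite !mxE.
rewrite -(big_enum_val (fun e => square_vec _ u i j e * (line_adj e (enum_val c))%:R)).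
by rewrite square_vec_leigen rmorphN rmorph_nat.
Qed.

Definition coord_const e j (b : bool) : bool := [forall p in val e, p j == b].

Lemma coord_const_cube_edge z t j b :
  coord_const (cube_edge z t) j b = (z j == b) && (flip z t j == b).
Proof.
apply/forall_inP/andP => [cz | [zb fb] p].
  by split; apply: cz; rewrite !inE eqxx ?orbT.
by rewrite !inE => /orP [] /eqP ->.
Qed.

Definition square_sides u i j : seq (edge n) :=
  [:: cube_edge u j; cube_edge (flip u j) i; cube_edge (flip u i) j].

Lemma square_sides_nconst u i j f :
  f \in square_sides u i j -> ~~ coord_const f j (u j).
Proof.
rewrite !inE => /or3P [] /eqP ->; rewrite coord_const_cube_edge !flip_at;
  by [case: (u j) | case: (flip u i j); case: (u j)].
Qed.

Lemma square_sides_coord_const u i k j f :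
  i != j -> k != j -> f \in square_sides u i k -> coord_const f j (u j).
Proof.
rewrite ![_ == j]eq_sym => ji jk; rewrite !inE => /or3P [] /eqP ->;
  by rewrite coord_const_cube_edge !flip_ne ?eqxx.
Qed.

Lemma square_vec_base (K : pzRingType) u i j :
  j != i -> square_vec K u i j (cube_edge u i) = 1.
Proof.
move=> ji; have base : coord_const (cube_edge u i) j (u j).
  by rewrite coord_const_cube_edge flip_ne ?eqxx.
have side f : f \in square_sides u i j -> (cube_edge u i == f) = false.
  by move=> fs; apply: (contraNF _ (square_sides_nconst fs)) => /eqP <-.
by rewrite /square_vec eqxx !side ?inE ?eqxx ?orbT // subr0 addr0 subr0.
Qed.

Lemma square_vec_out (K : pzRingType) u i j f :
  f != cube_edge u i -> f \notin square_sides u i j -> square_vec K u i j f = 0.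
Proof.
rewrite !inE !negb_or /square_vec => /negbTE -> /and3P [/negbTE-> /negbTE-> /negbTE->].
by rewrite subr0 addr0 subr0.
Qed.

End CubeEdges.

Lemma square_noPST (R : realType) n (u : cube n) (i j : 'I_n) (y : edge n) :
  j != i -> y != cube_edge u i -> y \notin square_sides u i j ->
  ~ PST (lineQ_adjmx R n) (enum_rank (cube_edge u i)) (enum_rank y).
Proof.
move=> ji yx ys.
apply: (leigen_noPST (square_row_leigen R u i j)); rewrite mxE enum_rankK.
- by rewrite square_vec_base ?oner_eq0.
- exact: square_vec_out.
Qed.

Theorem mainTheorem15 (R : realType) (n : nat) :
  (3 <= n)%N ->
  forall x y : edge n, x != y ->
  ~ PST (lineQ_adjmx R n) (enum_rank x) (enum_rank y).
Proof.
move=> n_ge3 x y; have [u [i ->]] := edge_decomp x; rewrite eq_sym => yx.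
have [j /andP [ji _]] := ord_avoid2 i i n_ge3.
have [y_ij | y_ij] := boolP (y \in square_sides u i j); last first.
  exact: square_noPST ji yx y_ij.
have [k /andP [ki kj]] := ord_avoid2 i j n_ge3.
(* The sides of the (i, j)-square leave the face [p j = u j], which contains the
   whole (i, k)-square. *)
apply: (square_noPST ki yx); apply: contraNN (square_sides_nconst y_ij).
by apply: square_sides_coord_const; rewrite // eq_sym.
Qed.
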